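(* There is a universal constant $K>0$ such that the following holds. Let $\rho_1,\dots,\rho_T$ be $d$-dimensional quantum states, $\varrho=\rho_1\otimes\cdots\otimes\rho_T$, $\rho_{\mathrm{avg}}=\frac1T\sum_t\rho_t$, and $\mu=\mathrm{Tr}[(\rho_{\mathrm{avg}}-\frac Id)^2]$. Let $A=\frac1{T^2}\sum_{1\le i\ne j\le T}S_{ij}-\frac Id$, where $S_{ij}$ is the swap operator on the $i$th and $j$th tensor components of $(\mathbb C^d)^{\otimes T}$ and $\frac Id$ denotes $\frac1d$ times the identity on $(\mathbb C^d)^{\otimes T}$. Then $$\big|\mathbb E_\varrho[A]-\mu\big|\le\frac1T,\qquad \mathrm{Var}_\varrho[A]\le K\Big(\frac\mu T+\frac1{T^2}\Big).$$
   Context: $\mathbb E_\varrho[Y]=\mathrm{Tr}[\varrho Y]$ and $\mathrm{Var}_\varrho[Y]=\mathbb E_\varrho[Y^2]-\mathbb E_\varrho[Y]^2$. *)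

(* Complex scalars: an arbitrary numClosedFieldType C
   (e.g. algC, or R[i] for a real closed field R). *)
From HB Require Import structures.
From mathcomp Require Import all_boot all_order all_algebra.
From mathcomp Require Import perm.
Set Implicit Arguments. Unset Strict Implicit. Unset Printing Implicit Defensive.
Import Order.TTheory GRing.Theory Num.Theory.
Local Open Scope ring_scope.

Definition adjmx (C : numClosedFieldType) m n (M : 'M[C]_(m, n)) : 'M[C]_(n, m) :=
  (map_mx Num.conj M)^T.

Definition psd (C : numClosedFieldType) n (M : 'M[C]_n) : Prop :=
  adjmx M = M /\ forall v : 'cV[C]_n, 0 <= (adjmx v *m M *m v) 0 0.

Definition is_state (C : numClosedFieldType) d (rho : 'M[C]_d) : Prop :=
  psd rho /\ \tr rho = 1.

(* computational basis of (C^d)^{\otimes T}: indexed by functions 'I_T -> 'I_d *)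
Definition tidx (d T : nat) := {ffun 'I_T -> 'I_d}.
Definition tdim (d T : nat) : nat := #|{: tidx d T}|.
Definition tval d T (x : 'I_(tdim d T)) : tidx d T := enum_val x.

Definition tensor_states (C : numClosedFieldType) d T (rho : 'I_T -> 'M[C]_d)
  : 'M[C]_(tdim d T) :=
  \matrix_(x, y) \prod_(t < T) rho t (tval x t) (tval y t).

(* swap operator S_ab exchanging tensor factors a and b:
   S_ab |y> = |y o (a b)>, so <x|S_ab|y> = [x = y o (a b)] *)
Definition swap_op (C : numClosedFieldType) d T (a b : 'I_T) : 'M[C]_(tdim d T) :=
  \matrix_(x, y)
    ((tval x == [ffun k => tval y (tperm a b k)]) %:R).

Definition expect (C : numClosedFieldType) n (rho Y : 'M[C]_n) : C := \tr (rho *m Y).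
Definition variance (C : numClosedFieldType) n (rho Y : 'M[C]_n) : C :=
  expect rho (Y *m Y) - expect rho Y ^+ 2.

Definition obsA (C : numClosedFieldType) d T : 'M[C]_(tdim d T) :=
  (T%:R ^+ 2)^-1 *: (\sum_(i < T) \sum_(j < T | i != j) swap_op C d i j)
  - (d%:R)^-1 *: 1%:M.

Definition rho_avg (C : numClosedFieldType) d T (rho : 'I_T -> 'M[C]_d) : 'M[C]_d :=
  (T%:R)^-1 *: \sum_(t < T) rho t.

Definition mu_of (C : numClosedFieldType) d T (rho : 'I_T -> 'M[C]_d) : C :=
  let B := rho_avg rho - (d%:R)^-1 *: 1%:M in \tr (B *m B).

(* Every product of swap operators on (C^d)^(x)T is a permutation operator [perm_op pi], whose
   expectation in rho_1 (x) ... (x) rho_T is a product of traces along the cycles of [pi]: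
   E[S_ij] = Tr(rho_i rho_j), E[S_ij S_il] = Tr(rho_i rho_j rho_l), and S_ij, S_kl are
   uncorrelated for disjoint pairs.  With R the average state, the mean of A is
   Tr(R^2) - 1/d = mu up to the diagonal terms Tr(rho_i^2)/T^2.  In the variance the O(T^2)
   coinciding pairs contribute at most 1 each, and the pairs sharing one index give 3-cycle
   traces, which summed over all index triples equal
   2T^3 (Tr R^3 - (1/T) sum_i Tr(rho_i R)^2) <= 2T^3 (Tr R^3 - (Tr R^2)^2)
                                            = 2T^3 (Tr(R (R - I/d)^2) - mu^2) <= 2T^3 mu;
   the triples with a repeated index only cost another O(T^2). *)

From Pilot Require Import Defs.
From HB Require Import structures.
From mathcomp Require Import all_boot all_order all_algebra perm ring.
Set Implicit Arguments. Unset Strict Implicit. Unset Printing Implicit Defensive.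
Import Order.TTheory GRing.Theory Num.Theory.
Local Open Scope ring_scope.

(* [tuple] exports its own [tval]; here it always means the basis labelling of Defs. *)
Local Notation tval := Defs.tval.

Lemma mxtrace_mul2E (R : pzSemiRingType) n (A B : 'M[R]_n) :
  \tr (A *m B) = \sum_(i < n) \sum_(j < n) A i j * B j i.
Proof. by apply: eq_bigr => i _; rewrite mxE. Qed.

Lemma mxtrace_mul3E (R : pzSemiRingType) n (A B D : 'M[R]_n) :
  \tr (A *m B *m D) = \sum_(i < n) \sum_(j < n) \sum_(k < n) A i j * B j k * D k i.
Proof.
apply: eq_bigr => i _; rewrite mxE; under eq_bigr do rewrite mxE big_distrl /=.
by rewrite exchange_big.
Qed.

Lemma cauchy_schwarz_sum (R : numDomainType) n (x y : 'I_n -> R) :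
  (forall i, x i \is Num.real) -> (forall i, y i \is Num.real) ->
  (\sum_(i < n) x i * y i) ^+ 2 <= (\sum_(i < n) x i ^+ 2) * (\sum_(i < n) y i ^+ 2).
Proof.
move=> x_real y_real; rewrite -subr_ge0 -(pmulr_rge0 _ (ltr0n R 2)).
have sum_xy2 : (\sum_i x i ^+ 2) * (\sum_i y i ^+ 2) =
    \sum_(i < n) \sum_(j < n) x i ^+ 2 * y j ^+ 2.
  by rewrite big_distrl; apply: eq_bigr => i _; rewrite big_distrr.
have sum_yx2 : (\sum_i x i ^+ 2) * (\sum_i y i ^+ 2) =
    \sum_(i < n) \sum_(j < n) x j ^+ 2 * y i ^+ 2.
  by rewrite sum_xy2 exchange_big.
have sum_xyxy : (\sum_i x i * y i) ^+ 2 =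
    \sum_(i < n) \sum_(j < n) (x i * y i) * (x j * y j).
  by rewrite expr2 big_distrl; apply: eq_bigr => i _; rewrite big_distrr.
have -> : 2%:R * ((\sum_i x i ^+ 2) * (\sum_i y i ^+ 2) - (\sum_i x i * y i) ^+ 2) =
    \sum_(i < n) \sum_(j < n) (x i * y j - x j * y i) ^+ 2.
  rewrite mulrBr mulr_natl mulr2n {1}sum_xy2 sum_yx2 sum_xyxy mulr_sumr -!big_split -sumrB.
  apply: eq_bigr => i _; rewrite mulr_sumr -!big_split -sumrB.
  by apply: eq_bigr => j _ /=; ring.
apply: sumr_ge0 => i _; apply: sumr_ge0 => j _.
by apply: real_exprn_even_ge0 => //; rewrite rpredB ?rpredM.
Qed.

Lemma sum_delta2_mull (R : pzSemiRingType) n (i j : 'I_n) (c e : R) (F : 'I_n -> R) :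
  \sum_(k < n) (c * (k == i)%:R + e * (k == j)%:R) * F k = c * F i + e * F j.
Proof.
have delta_sum l : \sum_(k < n) (k == l)%:R * F k = F l.
  by rewrite (bigD1 l) //= eqxx mul1r big1 ?addr0 // => k /negbTE ->; rewrite mul0r.
rewrite -(delta_sum i) -(delta_sum j) !mulr_sumr -big_split /=.
by apply: eq_bigr => k _; rewrite mulrDl !mulrA.
Qed.

Lemma sum_offdiag_meeting (R : comPzRingType) n (c : 'I_n -> 'I_n -> R) i j : i != j ->
  (forall k l, c k l = c l k) ->
  (forall k l, k != l -> k != i -> k != j -> l != i -> l != j -> c k l = 0) ->
  \sum_(k < n) \sum_(l < n | k != l) c k l =
  2 * c i j + 2 * \sum_(l < n | (l != i) && (l != j)) (c i l + c j l).
Proof.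
move=> ij c_sym c0; have ji : j != i by rewrite eq_sym.
rewrite (bigD1 i) //= [\sum_(k < n | k != i) _](bigD1 j) //=.
rewrite [\sum_(l < n | i != l) _](bigD1 j) //= [\sum_(l < n | j != l) _](bigD1 i) //=.
have -> : \sum_(k < n | (k != i) && (k != j)) \sum_(l < n | k != l) c k l =
          \sum_(k < n | (k != i) && (k != j)) (c i k + c j k).
  apply: eq_bigr => k /andP[ki kj].
  rewrite (bigD1 i) //= (bigD1 j) /=; last by rewrite kj ji.
  rewrite big1 ?addr0 => [|l /andP[/andP[kl li] lj]]; last exact: c0.
  by rewrite (c_sym k i) (c_sym k j).
have -> : \sum_(l < n | (i != l) && (l != j)) c i l =
          \sum_(l < n | (l != i) && (l != j)) c i l by apply: eq_bigl => l; rewrite eq_sym.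
have -> : \sum_(l < n | (j != l) && (l != i)) c j l =
          \sum_(l < n | (l != i) && (l != j)) c j l.
  by apply: eq_bigl => l; rewrite eq_sym andbC.
by rewrite (c_sym j i) big_split /=; ring.
Qed.

Lemma sum_distinct_triples_le (R : numDomainType) n (F : 'I_n -> 'I_n -> 'I_n -> R) B :
  (forall i j l, F i j l \is Num.real) -> (forall i j l, `|F i j l| <= B) ->
  \sum_(i < n) \sum_(j < n | i != j) \sum_(l < n | (l != i) && (l != j)) F i j l <=
  \sum_(i < n) \sum_(j < n) \sum_(l < n) F i j l + 3%:R * n%:R ^+ 2 * B.
Proof.
move=> F_real F_le.
pose corr i := \sum_(l < n) F i i l + \sum_(j < n | i != j) (F i j i + F i j j).
have -> : \sum_(i < n) \sum_(j < n) \sum_(l < n) F i j l =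
    \sum_(i < n) corr i +
    \sum_(i < n) \sum_(j < n | i != j) \sum_(l < n | (l != i) && (l != j)) F i j l.
  rewrite -big_split; apply: eq_bigr => i _; rewrite (bigD1 i) //= -addrA -big_split.
  congr (_ + _); apply: eq_big => [j|j ji /=]; first by rewrite eq_sym.
  by rewrite (bigD1 i) //= (bigD1 j) //= !addrA.
rewrite addrAC lerDr -lerBlDl sub0r lerNl.
have corr_real : \sum_(i < n) corr i \is Num.real.
  by apply: rpred_sum => i _; rewrite rpredD ?rpred_sum // => j _; rewrite rpredD.
apply: real_lerNnormlW => //; apply: le_trans (ler_norm_sum _ _ _) _.
have sum_le (P : pred 'I_n) (G : 'I_n -> R) b : (forall j, `|G j| <= b) ->
    `|\sum_(j < n | P j) G j| <= n%:R * b.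
  move=> G_le; apply: le_trans (ler_norm_sum _ _ _) _.
  apply: le_trans (ler_sum _ (fun j _ => G_le j)) _.
  apply: (@le_trans _ _ (\sum_(j < n) b)); last by rewrite sumr_const card_ord mulr_natl.
  by rewrite [leRHS](bigID P) lerDl sumr_ge0 // => j _; apply: le_trans (G_le j).
have -> : 3%:R * n%:R ^+ 2 * B = \sum_(i < n) (n%:R * B + n%:R * (B + B)).
  by rewrite sumr_const card_ord -mulr_natr; ring.
apply: ler_sum => i _; apply: le_trans (ler_normD _ _) _.
by rewrite lerD ?sum_le // => j; apply: le_trans (ler_normD _ _) _; rewrite lerD.
Qed.

Section PsdMatrices.
Variables (C : numClosedFieldType) (n : nat).
Implicit Types (A B D M P Q X : 'M[C]_n).

Lemma adjmxE m k (M : 'M[C]_(m, k)) i j : adjmx M i j = (M j i)^*.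
Proof. by rewrite /adjmx !mxE. Qed.

Lemma adjmx_mul m k l (A : 'M[C]_(m, k)) (B : 'M[C]_(k, l)) :
  adjmx (A *m B) = adjmx B *m adjmx A.
Proof.
apply/matrixP => i j; rewrite adjmxE !mxE rmorph_sum; apply: eq_bigr => x _.
by rewrite !adjmxE rmorphM mulrC.
Qed.

Lemma conj_mxtrace M : (\tr M)^* = \tr (adjmx M).
Proof. by rewrite rmorph_sum; apply: eq_bigr => i _; rewrite adjmxE. Qed.

Lemma mx_formE M (v : 'cV[C]_n) :
  (adjmx v *m M *m v) 0 0 = \sum_(l < n) \sum_(k < n) (v l 0)^* * M l k * v k 0.
Proof.
rewrite !mxE; under eq_bigr do rewrite mxE big_distrl /=.
by rewrite exchange_big; apply: eq_bigr => l _; apply: eq_bigr => k _; rewrite adjmxE.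
Qed.

Lemma psd_form2 M i j (z w : C) : psd M ->
  0 <= z^* * M i i * z + z^* * M i j * w + w^* * M j i * z + w^* * M j j * w.
Proof.
case=> _ /(_ (\col_k (z * (k == i)%:R + w * (k == j)%:R))); rewrite mx_formE.
under eq_bigr do under eq_bigr do rewrite !mxE rmorphD !rmorphM !rmorph_nat mulrC.
under eq_bigr do rewrite sum_delta2_mull.
under eq_bigr do rewrite mulrCA (mulrCA w) -mulrDr.
by rewrite sum_delta2_mull; congr (0 <= _); ring.
Qed.

Lemma psd_diag_ge0 M i : psd M -> 0 <= M i i.
Proof.
by move=> /(psd_form2 i i 1 0); rewrite rmorph1 rmorph0 !(mul0r, mulr0, addr0) mulr1 mul1r.
Qed.

Lemma psd_entry_sqr M i j : psd M -> `|M i j| ^+ 2 <= M i i * M j j.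
Proof.
move=> psdM; have [a_ge0 b_ge0] := (psd_diag_ge0 i psdM, psd_diag_ge0 j psdM).
have Mji : M j i = (M i j)^* by rewrite -adjmxE (proj1 psdM).
have form z w := psd_form2 i j z w psdM; rewrite Mji in form.
set a := M i i in a_ge0 form *; set b := M j j in b_ge0 form *; set x := M i j in Mji form *.
have [a_conj b_conj] : a^* = a /\ b^* = b by split; apply/conj_Creal/ger0_real.
rewrite normCK -subr_ge0; set D := a * b - x * x^*.
have bD_ge0 : 0 <= b * D.
  by move: (form b (- x^*)); rewrite rmorphN /= conjCK b_conj; congr (0 <= _); rewrite /D; ring.
have aD_ge0 : 0 <= a * D.
  by move: (form (- x) a); rewrite rmorphN /= a_conj; congr (0 <= _); rewrite /D; ring.
have [ab0|ab_neq0] := eqVneq (a + b) 0.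
  move/eqP: ab0; rewrite paddr_eq0 // => /andP[/eqP a0 /eqP b0].
  move: (form 1 (- x^*)); rewrite rmorphN /= rmorph1 conjCK /D a0 b0 => x_form.
  by rewrite -(pmulr_rge0 _ (ltr0n C 2)); move: x_form; congr (0 <= _); ring.
have ab_gt0 : 0 < a + b by rewrite lt0r ab_neq0 addr_ge0.
by rewrite -(pmulr_rge0 _ ab_gt0) mulrDl addr_ge0.
Qed.

Lemma psd_entry M i j : psd M -> `|M i j| <= sqrtC (M i i) * sqrtC (M j j).
Proof.
move=> psdM; have [a_ge0 b_ge0] := (psd_diag_ge0 i psdM, psd_diag_ge0 j psdM).
rewrite -sqrtCM ?nnegrE // -(sqrCK (normr_ge0 (M i j))).
by rewrite ler_sqrtC ?nnegrE ?exprn_ge0 ?mulr_ge0 // psd_entry_sqr.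
Qed.

Lemma psd_mxtrace_ge0 M : psd M -> 0 <= \tr M.
Proof. by move=> psdM; apply: sumr_ge0 => i _; apply: psd_diag_ge0. Qed.

Lemma psd_sqrt_diag_ge0 M i : psd M -> 0 <= sqrtC (M i i).
Proof. by move=> psdM; rewrite sqrtC_ge0 psd_diag_ge0. Qed.

Lemma psd_diag_cauchy_schwarz P Q : psd P -> psd Q ->
  (\sum_(i < n) sqrtC (P i i) * sqrtC (Q i i)) ^+ 2 <= \tr P * \tr Q.
Proof.
move=> psdP psdQ; have real_sqrt M i : psd M -> sqrtC (M i i) \is Num.real.
  by move=> psdM; apply/ger0_real/psd_sqrt_diag_ge0.
apply: le_trans (cauchy_schwarz_sum _ _) _; try by move=> i; apply: real_sqrt.
by under eq_bigr do rewrite sqrtCK; under [X in _ * X]eq_bigr do rewrite sqrtCK.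
Qed.

Lemma psd_mxtrace_mul_le P Q : psd P -> psd Q -> `|\tr (P *m Q)| <= \tr P * \tr Q.
Proof.
move=> psdP psdQ; pose p i := sqrtC (P i i); pose q i := sqrtC (Q i i).
apply: le_trans (psd_diag_cauchy_schwarz psdP psdQ); rewrite expr2 big_distrlr /=.
rewrite mxtrace_mul2E; apply: le_trans (ler_norm_sum _ _ _) _; apply: ler_sum => i _.
apply: le_trans (ler_norm_sum _ _ _) _; apply: ler_sum => j _.
rewrite normrM (_ : p i * q i * (p j * q j) = (p i * p j) * (q j * q i)); last by ring.
by apply: ler_pM; rewrite ?normr_ge0 ?psd_entry.
Qed.

Lemma psd_mxtrace_mul3_le A B D : psd A -> psd B -> psd D ->
  `|\tr (A *m B *m D)| <= \tr A * \tr B * \tr D.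
Proof.
move=> psdA psdB psdD.
pose a i := sqrtC (A i i); pose b i := sqrtC (B i i); pose c i := sqrtC (D i i).
have [a_ge0 b_ge0 c_ge0] : [/\ forall i, 0 <= a i, forall i, 0 <= b i & forall i, 0 <= c i].
  by split=> i; apply: psd_sqrt_diag_ge0.
pose X := \sum_(i < n) a i * c i; pose Y := \sum_(i < n) a i * b i.
pose Z := \sum_(i < n) b i * c i.
have [X_ge0 Y_ge0 Z_ge0] : [/\ 0 <= X, 0 <= Y & 0 <= Z].
  by split; apply: sumr_ge0 => i _; apply: mulr_ge0.
apply: (@le_trans _ _ (X * Y * Z)).
  have -> : X * Y * Z =
      \sum_(i < n) \sum_(j < n) \sum_(k < n) a i * c i * (a j * b j) * (b k * c k).
    rewrite big_distrlr big_distrl; apply: eq_bigr => i _.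
    by rewrite big_distrl; apply: eq_bigr => j _; rewrite big_distrr.
  rewrite mxtrace_mul3E; apply: le_trans (ler_norm_sum _ _ _) _; apply: ler_sum => i _.
  apply: le_trans (ler_norm_sum _ _ _) _; apply: ler_sum => j _.
  apply: le_trans (ler_norm_sum _ _ _) _; apply: ler_sum => k _.
  rewrite !normrM (_ : a i * c i * (a j * b j) * (b k * c k) =
    a i * a j * (b j * b k) * (c k * c i)); last by ring.
  by apply: ler_pM; rewrite ?mulr_ge0 ?normr_ge0 // ?psd_entry //; apply: ler_pM;
    rewrite ?normr_ge0 ?psd_entry.
have trA := psd_mxtrace_ge0 psdA; have trB := psd_mxtrace_ge0 psdB.
have trD := psd_mxtrace_ge0 psdD.
rewrite -ler_sqr ?nnegrE ?mulr_ge0 // !exprMn.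
have -> : \tr A ^+ 2 * \tr B ^+ 2 * \tr D ^+ 2 =
    (\tr A * \tr D) * (\tr A * \tr B) * (\tr B * \tr D) by ring.
apply: ler_pM; rewrite ?mulr_ge0 ?exprn_ge0 //; last exact: psd_diag_cauchy_schwarz.
by apply: ler_pM; rewrite ?exprn_ge0 //; exact: psd_diag_cauchy_schwarz.
Qed.

Lemma herm_mxtrace_mul_real A B : adjmx A = A -> adjmx B = B -> \tr (A *m B) \is Num.real.
Proof. by move=> hA hB; rewrite CrealE conj_mxtrace adjmx_mul hA hB mxtrace_mulC. Qed.

Lemma herm_conj_mxtrace_mul3 A B D : adjmx A = A -> adjmx B = B -> adjmx D = D ->
  (\tr (A *m B *m D))^* = \tr (A *m D *m B).
Proof.
by move=> hA hB hD; rewrite conj_mxtrace !adjmx_mul hA hB hD mulmxA mxtrace_mulC mulmxA.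
Qed.

Lemma herm_psd_mul_self X : adjmx X = X -> psd (X *m X).
Proof.
move=> hX; split=> [|v]; first by rewrite adjmx_mul hX.
rewrite (_ : adjmx v *m _ *m v = adjmx (X *m v) *m (X *m v)); last first.
  by rewrite adjmx_mul hX !mulmxA.
by rewrite mxE sumr_ge0 // => k _; rewrite adjmxE -normCKC exprn_ge0.
Qed.

Lemma psd_scale_sum (I : finType) (c : C) (M : I -> 'M[C]_n) :
  0 <= c -> (forall i, psd (M i)) -> psd (c *: \sum_i M i).
Proof.
move=> c_ge0 psdM; split=> [|v].
  apply/matrixP => i j; rewrite adjmxE !mxE !summxE rmorphM rmorph_sum /=.
  rewrite conj_Creal ?ger0_real //.
  by congr (_ * _); apply: eq_bigr => k _; rewrite -adjmxE (proj1 (psdM k)).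
rewrite -scalemxAr -scalemxAl mxE mulmx_sumr mulmx_suml summxE mulr_ge0 //.
by rewrite sumr_ge0 // => k _; apply: (proj2 (psdM k)).
Qed.

End PsdMatrices.

Lemma is_state_avg (C : numClosedFieldType) d T (rho : 'I_T -> 'M[C]_d) : (0 < T)%N ->
  (forall t, is_state (rho t)) -> is_state (rho_avg rho).
Proof.
move=> T_gt0 rho_state; split.
  by apply: psd_scale_sum => [|t]; [rewrite invr_ge0 | case: (rho_state t)].
rewrite mxtraceZ raddf_sum (eq_bigr (fun=> 1)) => [|t _]; last by case: (rho_state t).
by rewrite sumr_const card_ord -mulr_natr mul1r mulVf // pnatr_eq0 -lt0n.
Qed.

Section PermutationOperators.
Variables (C : numClosedFieldType) (d T : nat).

Definition perm_op (pi : 'I_T -> 'I_T) : 'M[C]_(tdim d T) :=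
  \matrix_(x, y) ((tval x == [ffun k => tval y (pi k)])%:R).

Lemma swap_opE a b : swap_op C d a b = perm_op (tperm a b).
Proof. by []. Qed.

Definition tidx_rank (f : tidx d T) : 'I_(tdim d T) := enum_rank f.

Lemma tidx_rankK : cancel tidx_rank (@Defs.tval d T).
Proof. exact: enum_rankK. Qed.

Lemma tvalK : cancel (@Defs.tval d T) tidx_rank.
Proof. exact: enum_valK. Qed.

Lemma sum_tval (F : tidx d T -> C) :
  \sum_(x < tdim d T) F (tval x) = \sum_(f : tidx d T) F f.
Proof.
rewrite [RHS](reindex (@Defs.tval d T)) //.
by exists tidx_rank => x _; [apply: tvalK | apply: tidx_rankK].
Qed.

Lemma sum_tval_delta (F : 'I_(tdim d T) -> C) (f : tidx d T) :
  \sum_(z < tdim d T) F z * (tval z == f)%:R = F (tidx_rank f).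
Proof.
rewrite (bigD1 (tidx_rank f)) //= tidx_rankK eqxx mulr1 big1 ?addr0 // => z zf.
by rewrite -(inj_eq (can_inj tvalK)) tidx_rankK in zf; rewrite (negbTE zf) mulr0.
Qed.

Lemma perm_op_mul pi sg : perm_op pi *m perm_op sg = perm_op (sg \o pi).
Proof.
apply/matrixP => x y; rewrite !mxE; under eq_bigr do rewrite !mxE.
by rewrite sum_tval_delta tidx_rankK; congr ((_ == _)%:R); apply/ffunP => k; rewrite !ffunE.
Qed.

Lemma perm_op_id : perm_op id = 1%:M.
Proof.
apply/matrixP => x y; rewrite !mxE (_ : [ffun k => tval y k] = tval y).
  by rewrite (inj_eq (can_inj tvalK)).
by apply/ffunP => k; rewrite ffunE.
Qed.

End PermutationOperators.

Section PermutationMoments.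
Variables (C : numClosedFieldType) (d T : nat) (rho : 'I_T -> 'M[C]_d).

Definition perm_moment (pi : 'I_T -> 'I_T) : C :=
  \sum_(f : tidx d T) \prod_(t < T) rho t (f t) (f (pi t)).

Lemma expect_perm_op pi : expect (tensor_states rho) (perm_op C d pi) = perm_moment pi.
Proof.
rewrite /expect /mxtrace /perm_moment -sum_tval; apply: eq_bigr => x _.
rewrite mxE; under eq_bigr do rewrite [perm_op _ _ _ _ _]mxE.
rewrite sum_tval_delta mxE tidx_rankK; apply: eq_bigr => t _; by rewrite ffunE.
Qed.

Hypothesis rho_tr1 : forall t, \tr (rho t) = 1.

(* The moments of small permutations are computed by pinning the coordinates moved by [pi]:
   the remaining coordinates only see diagonal entries and sum to 1 by [sum_pinned_traced]. *)
Lemma sum_pin (b : 'I_T) (Phi : tidx d T -> C) :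
  \sum_(f : tidx d T) Phi f = \sum_(v < d) \sum_(f : tidx d T) (f b == v)%:R * Phi f.
Proof.
rewrite exchange_big; apply: eq_bigr => f _; rewrite -big_distrl /=.
by rewrite (bigD1 (f b)) //= eqxx big1 ?addr0 ?mul1r // => v /negbTE; rewrite eq_sym => ->.
Qed.

Lemma sum_pinned_traced (s : seq 'I_T) (g : 'I_T -> 'I_d) : uniq s ->
  \sum_(f : tidx d T)
    (\prod_(t <- s) (f t == g t)%:R) * \prod_(t < T | t \notin s) rho t (f t) (f t) = 1.
Proof.
move=> s_uniq; pose H t x := if t \in s then (x == g t)%:R else rho t x x.
transitivity (\prod_(t < T) \sum_(x < d) H t x); last first.
  apply: big1 => t _; rewrite /H; case: (t \in s); last exact: rho_tr1.
  by rewrite (bigD1 (g t)) //= eqxx big1 ?addr0 // => x /negbTE ->.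
rewrite bigA_distr_bigA; apply: eq_bigr => f _; rewrite [RHS](bigID (mem s)) /= big_uniq //.
by congr (_ * _); apply: eq_bigr => t /= ts; rewrite /H ?ts ?(negbTE ts).
Qed.

Lemma prod_perm_support (s : seq 'I_T) pi (f : tidx d T) : uniq s ->
  (forall t, t \notin s -> pi t = t) ->
  \prod_(t < T) rho t (f t) (f (pi t)) =
  (\prod_(t <- s) rho t (f t) (f (pi t))) * \prod_(t < T | t \notin s) rho t (f t) (f t).
Proof.
move=> s_uniq pi_fix; rewrite (bigID (mem s)) /= big_uniq //.
by congr (_ * _); apply: eq_bigr => t /pi_fix ->.
Qed.

Lemma perm_moment_id pi : pi =1 id -> perm_moment pi = 1.
Proof.
move=> pi_id; rewrite /perm_moment; under eq_bigr do under eq_bigr do rewrite pi_id.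
transitivity (\prod_(t < T) \tr (rho t)); first by rewrite /mxtrace bigA_distr_bigA.
by rewrite big1.
Qed.

Lemma perm_moment_tperm a b : a != b -> perm_moment (tperm a b) = \tr (rho a *m rho b).
Proof.
move=> ab; have s_uniq : uniq [:: a; b] by rewrite /= inE ab.
rewrite mxtrace_mul2E /perm_moment (sum_pin a); apply: eq_bigr => u _.
rewrite (sum_pin b); apply: eq_bigr => v _.
pose g t := if t == a then u else v.
rewrite -[RHS]mulr1 -[in RHS](sum_pinned_traced g s_uniq) mulr_sumr; apply: eq_bigr => f _.
rewrite (prod_perm_support _ s_uniq); last first.
  by move=> t; rewrite !inE negb_or => /andP[ta tb]; rewrite tpermD // eq_sym.
have ba : b != a by rewrite eq_sym.
rewrite !big_cons !big_nil tpermL tpermR /g eqxx (negbTE ba).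
by case: eqP => [->|_]; case: eqP => [->|_]; rewrite ?mul0r ?mulr0 //=; ring.
Qed.

Lemma perm_moment_3cycle pi a b c :
  uniq [:: a; b; c] -> pi a = b -> pi b = c -> pi c = a ->
  (forall t, t \notin [:: a; b; c] -> pi t = t) ->
  perm_moment pi = \tr (rho a *m rho b *m rho c).
Proof.
move=> s_uniq pa pb pc pi_fix.
rewrite mxtrace_mul3E /perm_moment (sum_pin a); apply: eq_bigr => u _.
rewrite (sum_pin b); apply: eq_bigr => v _; rewrite (sum_pin c); apply: eq_bigr => w _.
pose g t := if t == a then u else if t == b then v else w.
rewrite -[RHS]mulr1 -[in RHS](sum_pinned_traced g s_uniq) mulr_sumr; apply: eq_bigr => f _.
rewrite (prod_perm_support _ s_uniq pi_fix) !big_cons !big_nil pa pb pc.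
move: s_uniq; rewrite /= !inE negb_or => /and3P[/andP[ab ac] bc _].
rewrite /g eqxx !(eq_sym _ a) (negbTE ab) (negbTE ac) eqxx (eq_sym c) (negbTE bc).
by do 3!case: eqP => [->|_]; rewrite ?mul0r ?mulr0 //=; ring.
Qed.

Lemma perm_moment_2tperm pi a b c e :
  uniq [:: a; b; c; e] -> pi a = b -> pi b = a -> pi c = e -> pi e = c ->
  (forall t, t \notin [:: a; b; c; e] -> pi t = t) ->
  perm_moment pi = \tr (rho a *m rho b) * \tr (rho c *m rho e).
Proof.
move=> s_uniq pa pb pc pe pi_fix.
rewrite !mxtrace_mul2E /perm_moment (sum_pin a) mulr_suml; apply: eq_bigr => u _.
rewrite (sum_pin b) mulr_suml; apply: eq_bigr => v _.
rewrite (sum_pin c) mulr_sumr; apply: eq_bigr => w _.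
rewrite (sum_pin e) mulr_sumr; apply: eq_bigr => z _.
pose g t := if t == a then u else if t == b then v else if t == c then w else z.
rewrite -[RHS]mulr1 -[in RHS](sum_pinned_traced g s_uniq) mulr_sumr; apply: eq_bigr => f _.
rewrite (prod_perm_support _ s_uniq pi_fix) !big_cons !big_nil pa pb pc pe.
move: s_uniq; rewrite /= !inE !negb_or => /and4P[/and3P[ab ac ae] /andP[bc be] ce _].
rewrite /g eqxx !(eq_sym _ a) (negbTE ab) (negbTE ac) (negbTE ae) eqxx.
rewrite !(eq_sym _ b) (negbTE bc) (negbTE be) eqxx (eq_sym e) (negbTE ce).
by do 4!case: eqP => [->|_]; rewrite ?mul0r ?mulr0 //=; ring.
Qed.

End PermutationMoments.

Section Expectation.
Variables (C : numClosedFieldType) (n : nat) (vr : 'M[C]_n).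
Implicit Types Y Z : 'M[C]_n.

Lemma expectD Y Z : expect vr (Y + Z) = expect vr Y + expect vr Z.
Proof. by rewrite /expect mulmxDr mxtraceD. Qed.

Lemma expectN Y : expect vr (- Y) = - expect vr Y.
Proof. by rewrite /expect mulmxN raddfN. Qed.

Lemma expectZ a Y : expect vr (a *: Y) = a * expect vr Y.
Proof. by rewrite /expect -scalemxAr mxtraceZ. Qed.

Lemma expect_sum (I : finType) (P : pred I) (Y : I -> 'M[C]_n) :
  expect vr (\sum_(i | P i) Y i) = \sum_(i | P i) expect vr (Y i).
Proof. by rewrite /expect mulmx_sumr raddf_sum. Qed.

Definition covariance Y Z := expect vr (Y *m Z) - expect vr Y * expect vr Z.

Lemma covariance_suml (I : finType) (P : pred I) (Y : I -> 'M[C]_n) Z :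
  covariance (\sum_(i | P i) Y i) Z = \sum_(i | P i) covariance (Y i) Z.
Proof. by rewrite /covariance mulmx_suml !expect_sum big_distrl -sumrB. Qed.

Lemma covariance_sumr (I : finType) (P : pred I) Y (Z : I -> 'M[C]_n) :
  covariance Y (\sum_(i | P i) Z i) = \sum_(i | P i) covariance Y (Z i).
Proof. by rewrite /covariance mulmx_sumr !expect_sum big_distrr -sumrB. Qed.

Hypothesis expect1 : expect vr 1%:M = 1.

Lemma variance_affine a b Y : variance vr (a *: Y - b *: 1%:M) = a ^+ 2 * covariance Y Y.
Proof.
rewrite /variance /covariance mulmxBl !mulmxBr -!scalemxAl -!scalemxAr !mul1mx !mulmx1.
by rewrite !(expectD, expectN, expectZ) expect1; ring.
Qed.

End Expectation.

Section SwapMoments.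
Variables (C : numClosedFieldType) (d T : nat) (rho : 'I_T -> 'M[C]_d).
Hypothesis rho_tr1 : forall t, \tr (rho t) = 1.

Local Notation E Y := (expect (tensor_states rho) Y).
Local Notation S i j := (swap_op C d i j).

Lemma expect_tensor1 : E 1%:M = 1.
Proof. by rewrite -(perm_op_id C d T) expect_perm_op perm_moment_id. Qed.

Lemma expect_swap i j : i != j -> E (S i j) = \tr (rho i *m rho j).
Proof. by move=> ij; rewrite swap_opE expect_perm_op perm_moment_tperm. Qed.

Lemma expect_swap_sqr i j : E (S i j *m S i j) = 1.
Proof.
by rewrite swap_opE perm_op_mul expect_perm_op perm_moment_id // => t /=; rewrite tpermK.
Qed.

Lemma expect_swap_mul_fst i j l : uniq [:: i; j; l] ->
  E (S i j *m S i l) = \tr (rho i *m rho j *m rho l).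
Proof.
move=> s_uniq; rewrite !swap_opE perm_op_mul expect_perm_op.
move: (s_uniq); rewrite /= !inE negb_or => /and3P[/andP[ij il] jl _].
apply: (perm_moment_3cycle rho_tr1) => //=.
- by rewrite tpermL tpermD // eq_sym.
- by rewrite tpermR tpermL.
- by rewrite (@tpermD _ i j) ?tpermR // eq_sym.
by move=> t; rewrite !inE !negb_or => /and3P[ti tj tl]; rewrite !tpermD // eq_sym.
Qed.

Lemma expect_swap_mul_snd i j l : uniq [:: i; j; l] ->
  E (S i j *m S j l) = \tr (rho i *m rho l *m rho j).
Proof.
move=> s_uniq; rewrite !swap_opE perm_op_mul expect_perm_op.
move: (s_uniq); rewrite /= !inE negb_or => /and3P[/andP[ij il] jl _].
apply: (perm_moment_3cycle rho_tr1) => /=.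
- by rewrite !inE negb_or il ij eq_sym jl.
- by rewrite tpermL tpermL.
- by rewrite (@tpermD _ i j) ?tpermR // eq_sym.
- by rewrite tpermR tpermD // eq_sym.
by move=> t; rewrite !inE !negb_or => /and3P[ti tl tj]; rewrite !tpermD // eq_sym.
Qed.

Lemma expect_swap_mul_disjoint i j k l : uniq [:: i; j; k; l] ->
  E (S i j *m S k l) = \tr (rho i *m rho j) * \tr (rho k *m rho l).
Proof.
move=> s_uniq; rewrite !swap_opE perm_op_mul expect_perm_op.
move: (s_uniq); rewrite /= !inE !negb_or => /and4P[/and3P[ij ik il] /andP[jk jl] kl _].
apply: (perm_moment_2tperm rho_tr1) => //=.
- by rewrite tpermL tpermD // eq_sym.
- by rewrite tpermR tpermD // eq_sym.
- by rewrite (@tpermD _ i j) ?tpermL // eq_sym.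
- by rewrite (@tpermD _ i j) ?tpermR // eq_sym.
by move=> t; rewrite !inE !negb_or => /and4P[ti tj tk tl]; rewrite !tpermD // eq_sym.
Qed.

End SwapMoments.

Definition swap_sum (C : numClosedFieldType) d T : 'M[C]_(tdim d T) :=
  \sum_(i < T) \sum_(j < T | i != j) swap_op C d i j.

Section SwapCovariance.
Variables (C : numClosedFieldType) (d T : nat) (rho : 'I_T -> 'M[C]_d).
Hypothesis rho_tr1 : forall t, \tr (rho t) = 1.

Local Notation cov := (covariance (tensor_states rho)).
Local Notation S i j := (swap_op C d i j).
Local Notation g i j := (\tr (rho i *m rho j)).
Local Notation h i j l := (\tr (rho i *m rho j *m rho l)).

(* Cov(S_ij, S_il) + Cov(S_ij, S_jl) for distinct i, j, l. *)
Definition overlap_cov (i j l : 'I_T) : C :=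
  h i j l - g i j * g i l + (h i l j - g i j * g j l).

Lemma swap_opC (i j : 'I_T) : S i j = S j i.
Proof. by rewrite !swap_opE tpermC. Qed.

Lemma covariance_swap_sum : cov (swap_sum C d T) (swap_sum C d T) =
  \sum_(i < T) \sum_(j < T | i != j)
     (2 * (1 - g i j ^+ 2) + 2 * \sum_(l < T | (l != i) && (l != j)) overlap_cov i j l).
Proof.
rewrite covariance_suml; apply: eq_bigr => i _; rewrite covariance_suml; apply: eq_bigr => j ij.
rewrite covariance_sumr; under eq_bigr do rewrite covariance_sumr.
rewrite (sum_offdiag_meeting (c := fun k l => cov (S i j) (S k l)) ij).
- rewrite /covariance expect_swap_sqr // expect_swap // expr2; congr (_ + 2 * _).
  apply: eq_bigr => l /andP[li lj]; have s_uniq : uniq [:: i; j; l].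
    by rewrite /= !inE negb_or ij !(eq_sym _ l) li lj.
  rewrite expect_swap_mul_fst // expect_swap_mul_snd // !expect_swap // 1?eq_sym //.
- by move=> k l; rewrite (swap_opC k l).
move=> k l kl ki kj li lj; have s_uniq : uniq [:: i; j; k; l].
  by rewrite /= !inE !negb_or ij kl !(eq_sym _ k) !(eq_sym _ l) ki kj li lj.
by rewrite /covariance expect_swap_mul_disjoint // !expect_swap // subrr.
Qed.

End SwapCovariance.

Section StateBounds.
Variables (C : numClosedFieldType) (d T : nat) (rho : 'I_T -> 'M[C]_d).
Hypothesis rho_state : forall t, is_state (rho t).
Hypotheses (d_gt0 : (0 < d)%N) (T_gt0 : (0 < T)%N).

Let rho_psd t : psd (rho t). Proof. by case: (rho_state t). Qed.
Let rho_tr1 t : \tr (rho t) = 1. Proof. by case: (rho_state t). Qed.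
Let rho_herm t : adjmx (rho t) = rho t. Proof. by case: (rho_psd t). Qed.

Local Notation g i j := (\tr (rho i *m rho j)).
Local Notation h i j l := (\tr (rho i *m rho j *m rho l)).
Local Notation R := (rho_avg rho).
Local Notation G i := (\tr (rho i *m R)).
Local Notation p := (\tr (R *m R)).
Local Notation q := (\tr (R *m R *m R)).
Local Notation B := (R - (d%:R)^-1 *: 1%:M).

Let R_state : is_state R. Proof. exact: is_state_avg. Qed.
Let R_herm : adjmx R = R. Proof. by case: R_state => -[]. Qed.
Let Tn0 : (T%:R : C) != 0. Proof. by rewrite pnatr_eq0 -lt0n. Qed.
Let dn0 : (d%:R : C) != 0. Proof. by rewrite pnatr_eq0 -lt0n. Qed.

Lemma state_mxtrace_mul_real i j : g i j \is Num.real.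
Proof. exact: herm_mxtrace_mul_real. Qed.

Lemma state_mxtrace_mul_le1 i j : `|g i j| <= 1.
Proof.
apply: le_trans (psd_mxtrace_mul_le (rho_psd i) (rho_psd j)) _.
by rewrite !rho_tr1 mulr1.
Qed.

Lemma state_mxtrace_mul3_le1 i j l : `|h i j l| <= 1.
Proof.
apply: le_trans (psd_mxtrace_mul3_le (rho_psd i) (rho_psd j) (rho_psd l)) _.
by rewrite !rho_tr1 !mulr1.
Qed.

Lemma overlap_cov_real i j l : overlap_cov rho i j l \is Num.real.
Proof.
have -> : overlap_cov rho i j l = (h i j l + (h i j l)^*) - g i j * g i l - g i j * g j l.
  by rewrite herm_conj_mxtrace_mul3 // /overlap_cov; ring.
by rewrite !rpredB ?rpredM ?state_mxtrace_mul_real // CrealE rmorphD /= conjCK addrC.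
Qed.

Lemma overlap_cov_norm_le4 i j l : `|overlap_cov rho i j l| <= 4%:R.
Proof.
have g2_le1 a b c e : `|g a b * g c e| <= 1.
  by rewrite normrM mulr_ile1 ?normr_ge0 ?state_mxtrace_mul_le1.
apply: le_trans (ler_normD _ _) _; rewrite (_ : 4%:R = 1 + 1 + (1 + 1)); last by ring.
by apply: lerD; apply: le_trans (ler_normB _ _) _; rewrite lerD ?state_mxtrace_mul3_le1 ?g2_le1.
Qed.

Lemma sum_rho_avg : \sum_(t < T) rho t = T%:R *: R.
Proof. by rewrite /rho_avg scalerA mulfV // scale1r. Qed.

Lemma sum_mxtrace_mulr i : \sum_(j < T) g i j = T%:R * G i.
Proof.
rewrite (_ : \sum_j g i j = \tr (rho i *m \sum_j rho j)); last by rewrite mulmx_sumr raddf_sum.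
by rewrite sum_rho_avg -scalemxAr mxtraceZ.
Qed.

Lemma sum_mxtrace_mull j : \sum_(i < T) g i j = T%:R * G j.
Proof. by rewrite -sum_mxtrace_mulr; apply: eq_bigr => i _; exact: mxtrace_mulC. Qed.

Lemma sum_mxtrace_mul_avg : \sum_(i < T) G i = T%:R * p.
Proof.
rewrite (_ : \sum_i G i = \tr ((\sum_i rho i) *m R)); last by rewrite mulmx_suml raddf_sum.
by rewrite sum_rho_avg -scalemxAl mxtraceZ.
Qed.

Lemma sum_mxtrace_mul2 : \sum_(i < T) \sum_(j < T) g i j = T%:R ^+ 2 * p.
Proof.
under eq_bigr do rewrite sum_mxtrace_mulr.
by rewrite -mulr_sumr sum_mxtrace_mul_avg expr2 mulrA.
Qed.

Lemma sum_mxtrace_mul3 : \sum_(i < T) \sum_(j < T) \sum_(l < T) h i j l = T%:R ^+ 3 * q.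
Proof.
pose S := \sum_(t < T) rho t.
transitivity (\tr (S *m S *m S)); last first.
  rewrite /S sum_rho_avg; move: (rho_avg rho) => X.
  by rewrite -!scalemxAl -!scalemxAr -scalemxAl !mxtraceZ; ring.
rewrite {1}/S (mulmx_suml S) (mulmx_suml S) raddf_sum; apply: eq_bigr => i _ /=.
rewrite {1}/S (mulmx_sumr (rho i)) (mulmx_suml S) raddf_sum; apply: eq_bigr => j _ /=.
by rewrite /S (mulmx_sumr (rho i *m rho j)) raddf_sum.
Qed.

Lemma sum_overlap_cov : \sum_(i < T) \sum_(j < T) \sum_(l < T) overlap_cov rho i j l =
  2 * (T%:R ^+ 3 * q) - 2 * (T%:R ^+ 2 * \sum_(i < T) G i ^+ 2).
Proof.
have sum_h_swap : \sum_(i < T) \sum_(j < T) \sum_(l < T) h i l j = T%:R ^+ 3 * q.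
  by rewrite -sum_mxtrace_mul3; apply: eq_bigr => i _; rewrite exchange_big.
have sum_gg_fst : \sum_(i < T) \sum_(j < T) \sum_(l < T) (g i j * g i l) =
    T%:R ^+ 2 * \sum_(i < T) G i ^+ 2.
  rewrite mulr_sumr; apply: eq_bigr => i _; rewrite -big_distrlr /= sum_mxtrace_mulr; ring.
have sum_gg_snd : \sum_(i < T) \sum_(j < T) \sum_(l < T) (g i j * g j l) =
    T%:R ^+ 2 * \sum_(i < T) G i ^+ 2.
  under eq_bigr do under eq_bigr do rewrite -big_distrr /= sum_mxtrace_mulr.
  rewrite exchange_big mulr_sumr; apply: eq_bigr => j _.
  by rewrite -big_distrl /= sum_mxtrace_mull; ring.
rewrite !mulr_natl !mulr2n -{1}sum_mxtrace_mul3 -sum_h_swap -{1}sum_gg_fst -sum_gg_snd.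
rewrite opprD addrACA -!sumrB -big_split; apply: eq_bigr => i _.
rewrite -!sumrB -big_split; apply: eq_bigr => j _.
by rewrite -!sumrB -big_split.
Qed.

Lemma rho_avg_dev_herm : adjmx B = B.
Proof.
have inv_d_real : ((d%:R)^-1 : C)^* = (d%:R)^-1 by rewrite conj_Creal // rpredV realn.
have := R_herm; move: (rho_avg rho) => X X_herm.
apply/matrixP => i j; rewrite adjmxE !mxE rmorphB rmorphM /= inv_d_real.
by rewrite -adjmxE X_herm rmorph_nat eq_sym.
Qed.

Lemma mu_ofE : mu_of rho = p - (d%:R)^-1.
Proof.
have := R_state; rewrite /mu_of /=; move: (rho_avg rho) => X [_ trX].
rewrite mulmxBl !mulmxBr -!scalemxAl -!scalemxAr !mul1mx !mulmx1.
by rewrite !raddfB /= !mxtraceZ mxtrace1 trX; field.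
Qed.

Lemma mu_of_ge0 : 0 <= mu_of rho.
Proof. exact/psd_mxtrace_ge0/herm_psd_mul_self/rho_avg_dev_herm. Qed.

Lemma avg_cubic_moment_le : q - p ^+ 2 <= mu_of rho.
Proof.
have dev_moment : \tr (R *m (B *m B)) = q - 2 * (d%:R)^-1 * p + (d%:R)^-1 ^+ 2.
  have := R_state; move: (rho_avg rho) => X [_ trX].
  rewrite mulmxBl !mulmxBr -!scalemxAl -!scalemxAr !mul1mx !mulmx1 mulmxA.
  by rewrite !raddfB /= !mxtraceZ trX; ring.
have Q_psd := herm_psd_mul_self rho_avg_dev_herm.
have -> : q - p ^+ 2 = \tr (R *m (B *m B)) - mu_of rho ^+ 2 by rewrite dev_moment mu_ofE; ring.
apply: (@le_trans _ _ (\tr (R *m (B *m B)))).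
  by rewrite lerBlDr lerDl exprn_ge0 ?mu_of_ge0.
have [R_psd trR] := R_state.
apply: le_trans (real_ler_norm _) _; first exact: herm_mxtrace_mul_real R_herm (proj1 Q_psd).
by apply: le_trans (psd_mxtrace_mul_le R_psd Q_psd) _; rewrite trR mul1r.
Qed.

Lemma sum_overlap_cov_le :
  \sum_(i < T) \sum_(j < T) \sum_(l < T) overlap_cov rho i j l <= 2 * T%:R ^+ 3 * mu_of rho.
Proof.
have G_CS : (T%:R * p) ^+ 2 <= (\sum_(i < T) G i ^+ 2) * T%:R.
  have G_real i : G i \is Num.real by apply: herm_mxtrace_mul_real.
  move: (@cauchy_schwarz_sum _ _ (fun i => G i) (fun=> 1) G_real (fun=> rpred1 _)).
  under eq_bigr do rewrite mulr1; under [X in _ * X]eq_bigr do rewrite expr1n.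
  by rewrite sum_mxtrace_mul_avg sumr_const card_ord -mulr_natr mul1r.
rewrite sum_overlap_cov; apply: (@le_trans _ _ (2 * T%:R ^+ 3 * (q - p ^+ 2))); last first.
  by rewrite ler_wpM2l ?mulr_ge0 ?exprn_ge0 ?avg_cubic_moment_le.
rewrite (_ : 2 * T%:R ^+ 3 * (q - p ^+ 2) = 2 * (T%:R ^+ 3 * q) - 2 * (T%:R * (T%:R * p) ^+ 2));
  last by ring.
rewrite lerD2l lerN2 ler_wpM2l //.
by rewrite (_ : T%:R ^+ 2 * _ = T%:R * ((\sum_i G i ^+ 2) * T%:R)) ?ler_wpM2l //; ring.
Qed.

Lemma covariance_swap_sum_le :
  covariance (tensor_states rho) (swap_sum C d T) (swap_sum C d T) <=
  26%:R * T%:R ^+ 2 + 4%:R * T%:R ^+ 3 * mu_of rho.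
Proof.
rewrite covariance_swap_sum //; under eq_bigr do rewrite big_split /= -!mulr_sumr.
rewrite big_split /= -!mulr_sumr.
have pairs_le : \sum_(i < T) \sum_(j < T | i != j) (1 - g i j ^+ 2) <= T%:R ^+ 2.
  apply: (@le_trans _ _ (\sum_(i < T) \sum_(j < T) (1 : C))); last first.
    by rewrite !sumr_const card_ord expr2 mulr_natr.
  apply: ler_sum => i _; apply: (@le_trans _ _ (\sum_(j < T | i != j) (1 : C))).
    by apply: ler_sum => j _; rewrite lerBlDr lerDl real_exprn_even_ge0 ?state_mxtrace_mul_real.
  by rewrite [leRHS](bigID (fun j => i != j)) lerDl sumr_ge0.
have := sum_distinct_triples_le overlap_cov_real overlap_cov_norm_le4.
rewrite (_ : 26%:R * _ + _ =
    2 * T%:R ^+ 2 + 2 * (2 * T%:R ^+ 3 * mu_of rho + 3%:R * T%:R ^+ 2 * 4%:R)); last by ring.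
move=> triples_le; rewrite lerD ?ler_wpM2l //; apply: le_trans triples_le _.
by rewrite lerD2r sum_overlap_cov_le.
Qed.

Lemma expect_obsA_dev_le : `|expect (tensor_states rho) (obsA C d T) - mu_of rho| <= T%:R^-1.
Proof.
have sum_offdiag_g : \sum_(i < T) \sum_(j < T | i != j) g i j =
    T%:R ^+ 2 * p - \sum_(i < T) g i i.
  rewrite -sum_mxtrace_mul2 -sumrB; apply: eq_bigr => i _.
  by rewrite [\sum_(j < T) _](bigD1 i) //= addrC addrK; apply: eq_bigl => j; rewrite eq_sym.
rewrite /obsA expectD expectN !expectZ expect_tensor1 // expect_sum.
under eq_bigr do rewrite expect_sum.
under eq_bigr do under eq_bigr => j ij do rewrite expect_swap //.
rewrite sum_offdiag_g mu_ofE mulr1.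
rewrite (_ : _ - _ - _ = - ((T%:R ^+ 2)^-1 * \sum_(i < T) g i i)); last by field; rewrite Tn0 dn0.
rewrite normrN normrM ger0_norm ?invr_ge0 ?exprn_ge0 // expr2 invfM -mulrA.
rewrite ler_pdivrMl ?ltr0n // mulfV // ler_pdivrMl ?ltr0n // mulr1.
apply: le_trans (ler_norm_sum _ _ _) _; apply: (@le_trans _ _ (\sum_(i < T) (1 : C))).
  by apply: ler_sum => i _; apply: state_mxtrace_mul_le1.
by rewrite sumr_const card_ord.
Qed.

Lemma variance_obsA_le :
  variance (tensor_states rho) (obsA C d T) <= 26%:R * (mu_of rho / T%:R + (T%:R ^+ 2)^-1).
Proof.
rewrite /obsA -/(swap_sum C d T) variance_affine ?expect_tensor1 //.
have a_ge0 : 0 <= ((T%:R ^+ 2)^-1 : C) ^+ 2 by rewrite exprn_ge0 // invr_ge0 exprn_ge0.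
apply: le_trans (ler_wpM2l a_ge0 covariance_swap_sum_le) _.
rewrite (_ : _ * (_ + _) = 26%:R * (T%:R ^+ 2)^-1 + 4%:R * (mu_of rho / T%:R)); last by field.
by rewrite mulrDr addrC lerD2r ler_wpM2r ?divr_ge0 ?mu_of_ge0 // ler_nat.
Qed.

End StateBounds.

Theorem lemma7p2 :
  exists K : rat, 0 < K /\
  forall (C : numClosedFieldType) (d T : nat) (rho : 'I_T -> 'M[C]_d),
    (0 < d)%N -> (0 < T)%N ->
    (forall t, is_state (rho t)) ->
    let vrho := tensor_states rho in
    let A := obsA C d T in
    let mu := mu_of rho in
    `|expect vrho A - mu| <= (T%:R)^-1 /\
    variance vrho A <= ratr K * (mu / T%:R + (T%:R ^+ 2)^-1).
Proof.
exists 26%:R; split=> [|C d T rho d_gt0 T_gt0 rho_state]; first by rewrite ltr0n.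
by rewrite rmorph_nat; split; [apply: expect_obsA_dev_le | apply: variance_obsA_le].
Qed.
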